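(* Let $G$ be a block graph with at least one edge and let $H$ be a maximal threshold subgraph of $G$. Then there exist a block $Q$ of $G$ and a vertex $u\in V(Q)$ such that $E(H)=E(Q_u(G))$.
   Context: All graphs are finite and simple. A block is a maximal connected subgraph with no cut-vertex of its own; a block graph is a graph whose blocks are all complete. For a clique $Q$ in $G$ and $u\in V(Q)$, $Q_u(G)=\big(V(Q)\cup N_G(u),\ E(Q)\cup\delta_G(u)\big)$, where $N_G(u)$ is the neighbourhood and $\delta_G(u)$ the incident edge set of $u$. A threshold graph is a graph obtainable from a single vertex by repeatedly adding an isolated or a universal vertex; equivalently, a graph with no induced $P_4$, $C_4$ or $2K_2$. A threshold subgraph $H$ of $G$ is maximal if no threshold subgraph $H'$ of $G$ satisfies $E(H)\subsetneq E(H')$. *)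

(* A finite simple graph is a symmetric irreflexive relation
   e : rel T on a finType T. Edges are represented as 2-element vertex sets. *)
From mathcomp Require Import all_boot.
Set Implicit Arguments. Unset Strict Implicit. Unset Printing Implicit Defensive.

Section Graphs.
Variable T : finType.

Definition simple_graph (e : rel T) : Prop := symmetric e /\ irreflexive e.

Definition gedges (e : rel T) : {set {set T}} :=
  [set f : {set T} | [exists x : T, exists y : T, e x y && (f == [set x; y])]].

(* G[S] is connected (the empty graph counts as connected) *)
Definition connected_on (e : rel T) (S : {set T}) : Prop :=
  forall x y, x \in S -> y \in S ->
    connect [rel a b | [&& e a b, a \in S & b \in S]] x y.

Definition biconn_on (e : rel T) (S : {set T}) : Prop :=
  S != set0 /\ connected_on e S /\
  (forall v, v \in S -> connected_on e (S :\ v)).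

(* a block: a maximal such vertex set (maximal such subgraphs are induced) *)
Definition is_block (e : rel T) (B : {set T}) : Prop :=
  biconn_on e B /\ (forall B' : {set T}, B \subset B' -> biconn_on e B' -> B' = B).

Definition is_clique (e : rel T) (Q : {set T}) : Prop :=
  forall x y, x \in Q -> y \in Q -> x != y -> e x y.

Definition block_graph (e : rel T) : Prop :=
  simple_graph e /\ forall B, is_block e B -> is_clique e B.

(* Graphs (V, F) built from a single vertex by repeatedly adding an isolated
   or a universal vertex. *)
Inductive threshold_build : {set T} -> {set {set T}} -> Prop :=
| thr_single : forall v, threshold_build [set v] set0
| thr_add : forall (S : {set T}) (F : {set {set T}}) v, v \in S ->
    threshold_build (S :\ v) [set f in F | v \notin f] ->
    ((forall f, f \in F -> v \notin f) \/
     (forall w, w \in S -> w != v -> [set v; w] \in F)) ->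
    threshold_build S F.

Definition threshold_graph (V : {set T}) (F : {set {set T}}) : Prop :=
  (forall f, f \in F -> exists x y, [/\ x != y, x \in V, y \in V & f = [set x; y]])
  /\ threshold_build V F.

Definition threshold_subgraph (e : rel T) (V : {set T}) (F : {set {set T}}) : Prop :=
  F \subset gedges e /\ threshold_graph V F.

Definition maximal_threshold_subgraph (e : rel T) (V : {set T}) (F : {set {set T}}) : Prop :=
  threshold_subgraph e V F /\
  (forall (V' : {set T}) (F' : {set {set T}}), threshold_subgraph e V' F' -> ~ (F \proper F')).

Definition Qu_edges (e : rel T) (Q : {set T}) (u : T) : {set {set T}} :=
  [set f : {set T} | [exists x in Q, exists y in Q, (x != y) && (f == [set x; y])]]
  :|: [set f : {set T} | [exists w : T, e u w && (f == [set u; w])]].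

End Graphs.

From mathcomp Require Import all_boot zify.
From Stdlib Require Import Classical.
Set Implicit Arguments. Unset Strict Implicit. Unset Printing Implicit Defensive.

(* A threshold graph has a dominating vertex u (every edge contains u or has
   both ends adjacent to u) and any two disjoint edges are joined by an edge.
   Choose such a u of H that is not isolated in G.  Then u together with the
   vertices of the edges of H avoiding u spans a 2-connected subgraph of G
   (u is adjacent to all of it, and the rest is connected by the second
   property), so it lies in a block Q, which is a clique; hence
   E(H) ⊆ E(Q_u(G)).  Since Q_u(G) is itself threshold (u is universal over
   the clique Q plus isolated vertices), maximality gives equality. *)

Section Graphs.
Variable T : finType.
Implicit Types (S W C Q : {set T}) (F : {set {set T}}) (e : rel T).

Local Notation link e S := [rel a b | [&& e a b, a \in S & b \in S]].

Lemma gedgesP e f : reflect (exists a b, e a b /\ f = [set a; b]) (f \in gedges e).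
Proof.
rewrite inE; apply: (iffP existsP) => [[a /existsP[b /andP[ab /eqP ->]]]|[a [b [ab ->]]]].
  by exists a, b.
by exists a; apply/existsP; exists b; rewrite ab eqxx.
Qed.

Lemma gedges_pair e x y : simple_graph e -> ([set x; y] \in gedges e) = e x y.
Proof.
case=> sym irr; apply/idP/idP => [|xy]; last by apply/gedgesP; exists x, y.
case/gedgesP=> a [b [ab E]].
have ba : b != a by apply: contraTneq ab => ->; rewrite irr.
have xab : x \in [set a; b] by rewrite -E set21.
have yab : y \in [set a; b] by rewrite -E set22.
have diag c : [set c; c] = [set a; b] -> False.
  move=> Ec; have: [set a; b] \subset [set c] by rewrite -Ec setUid.
  by rewrite subUset !sub1set !inE => /andP[/eqP ac /eqP bc]; rewrite ac bc eqxx in ba.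
move: E; case/set2P: xab => ->; case/set2P: yab => -> E //.
- by case: (diag _ E).
- by rewrite sym.
- by case: (diag _ E).
Qed.

Definition edges_within S F := forall f, f \in F -> f \subset S /\ f != set0.

Definition dominates F u :=
  forall f, f \in F -> u \in f \/ forall x, x \in f -> [set u; x] \in F.

Definition joined_disjoint F := forall f1 f2, f1 \in F -> f2 \in F ->
  [disjoint f1 & f2] -> exists a b, [/\ a \in f1, b \in f2 & [set a; b] \in F].

Lemma edges_within_del S F v :
  edges_within S F -> edges_within (S :\ v) [set f in F | v \notin f].
Proof.
move=> wF f; rewrite inE => /andP[fF vf]; have [fS f0] := wF f fF; split=> //.
apply/subsetP=> x xf; rewrite !inE (subsetP fS x xf) andbT.
by apply: contraNneq vf => <-.
Qed.

Lemma filter_isolated F v :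
  (forall f, f \in F -> v \notin f) -> [set f in F | v \notin f] = F.
Proof. by move=> iso; apply/setP=> f; rewrite inE andb_idr //; apply: iso. Qed.

Lemma threshold_build_dominates S F :
  threshold_build S F -> edges_within S F -> exists u, dominates F u.
Proof.
elim=> {S F} [v|S F v vS _ IH [iso|uni]] wF.
- by exists v => f; rewrite inE.
- by rewrite -(filter_isolated iso); apply/IH/edges_within_del.
- exists v => f fF; have [vf|vf] := boolP (v \in f); first by left.
  right=> x xf; apply: uni; first exact: subsetP (wF f fF).1 x xf.
  by apply: contraNneq vf => <-.
Qed.

Lemma threshold_build_joined S F :
  threshold_build S F -> edges_within S F -> joined_disjoint F.
Proof.
elim=> {S F} [v|S F v vS _ IH [iso|uni]] wF.
- by move=> f1 f2; rewrite inE.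
- by rewrite -(filter_isolated iso); apply/IH/edges_within_del.
have join_v g1 g2 : g1 \in F -> g2 \in F -> [disjoint g1 & g2] -> v \in g1 ->
    exists a b, [/\ a \in g1, b \in g2 & [set a; b] \in F].
  move=> g1F g2F dis vg1; have [g2S /set0Pn[x xg2]] := wF g2 g2F.
  exists v, x; split=> //; apply: uni; first exact: subsetP g2S x xg2.
  by apply: contraTneq xg2 => ->; rewrite (disjointFr dis vg1).
move=> f1 f2 f1F f2F dis.
have [v1|v1] := boolP (v \in f1); first exact: join_v.
have [v2|v2] := boolP (v \in f2).
  have [a [b [af bf abF]]] := join_v _ _ f2F f1F (etrans (disjoint_sym _ _) dis) v2.
  by exists b, a; rewrite setUC.
have [|||a [b [af bf]]] := IH (@edges_within_del S F v wF) f1 f2; rewrite ?inE ?f1F ?f2F //.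
by case/andP=> abF _; exists a, b.
Qed.

Lemma threshold_graph_edges_within V F : threshold_graph V F -> edges_within V F.
Proof.
case=> wf _ f /wf[x [y [_ xV yV ->]]]; split; first by rewrite subUset !sub1set xV.
by apply/set0Pn; exists x; rewrite set21.
Qed.

Definition clique_edges C : {set {set T}} :=
  [set f : {set T} | [exists x in C, exists y in C, (x != y) && (f == [set x; y])]].

Definition star e u : {set {set T}} :=
  [set f : {set T} | [exists w, e u w && (f == [set u; w])]].

Lemma Qu_edgesE e Q u : Qu_edges e Q u = clique_edges Q :|: star e u.
Proof. by []. Qed.

Lemma clique_edgesP C f :
  reflect (exists x y, [/\ x \in C, y \in C, x != y & f = [set x; y]]) (f \in clique_edges C).
Proof.
rewrite inE; apply: (iffP existsP).
  by case=> x /andP[xC /existsP[y /andP[yC /andP[xy /eqP ->]]]]; exists x, y.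
case=> x [y [xC yC xy ->]]; exists x; rewrite xC /=.
by apply/existsP; exists y; rewrite yC xy eqxx.
Qed.

Lemma starP e u f : reflect (exists w, e u w /\ f = [set u; w]) (f \in star e u).
Proof.
rewrite inE; apply: (iffP existsP) => [[w /andP[uw /eqP ->]]|[w [uw ->]]].
  by exists w.
by exists w; rewrite uw eqxx.
Qed.

Lemma clique_edges_del C v : [set f in clique_edges C | v \notin f] = clique_edges (C :\ v).
Proof.
apply/setP=> f; rewrite inE; apply/andP/clique_edgesP.
  case=> /clique_edgesP[x [y [xC yC xy Ef]]]; rewrite Ef !inE negb_or => /andP[vx vy].
  by exists x, y; rewrite !inE eq_sym vx eq_sym vy.
case=> x [y [/setD1P[xv xC] /setD1P[yv yC] xy ->]]; split.
  by apply/clique_edgesP; exists x, y.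
by rewrite !inE negb_or eq_sym xv eq_sym yv.
Qed.

Lemma star_del e u : [set f in star e u | u \notin f] = set0.
Proof.
apply/setP=> f; rewrite in_set0 in_set; apply/negbTE/negP.
by case/andP=> /starP[w [_ ->]]; rewrite set21.
Qed.

Lemma threshold_build_clique_edges W C :
  W != set0 -> C \subset W -> threshold_build W (clique_edges C).
Proof.
have [n] := ubnP #|W|; elim: n W C => // n IH W C cardW W0 CW.
have [/eqP/cards1P[v Wv]|W1] := eqVneq #|W| 1.
  rewrite Wv in CW *; rewrite (_ : clique_edges C = set0); first exact: thr_single.
  apply/setP=> f; rewrite in_set0; apply/negbTE/clique_edgesP => -[x [y [xC yC]]].
  by rewrite (set1P (subsetP CW x xC)) (set1P (subsetP CW y yC)) eqxx.
have step v : v \in W -> (forall f, f \in clique_edges C -> v \notin f) \/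
    (forall w, w \in W -> w != v -> [set v; w] \in clique_edges C) ->
    threshold_build W (clique_edges C).
  move=> vW; apply: (thr_add vW); rewrite clique_edges_del; apply: IH; last exact: setSD.
    by move: cardW; rewrite (cardsD1 v W) vW; lia.
  by rewrite -card_gt0; move: W1 (card_gt0 W); rewrite W0 (cardsD1 v W) vW; lia.
have [/eqP|/set0Pn[v /setDP[vW vC]]] := eqVneq (W :\: C) set0.
  rewrite setD_eq0 => WC; have [v vW] := set0Pn _ W0; apply: (step v vW); right.
  by move=> w wW wv; apply/clique_edgesP; exists v, w; rewrite eq_sym !(subsetP WC).
apply: (step v vW); left=> f /clique_edgesP[x [y [xC yC _ ->]]].
by rewrite !inE negb_or; apply/andP; split; apply: contraNneq vC => ->.
Qed.

Lemma clique_edges_sub_gedges e Q : is_clique e Q -> clique_edges Q \subset gedges e.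
Proof.
move=> cQ; apply/subsetP=> f /clique_edgesP[x [y [xQ yQ xy ->]]].
by apply/gedgesP; exists x, y; split=> //; apply: cQ.
Qed.

Lemma star_sub_gedges e u : star e u \subset gedges e.
Proof. by apply/subsetP=> f /starP[w [uw ->]]; apply/gedgesP; exists u, w. Qed.

Lemma Qu_edges_del e Q u : [set f in Qu_edges e Q u | u \notin f] = clique_edges (Q :\ u).
Proof.
rewrite -clique_edges_del -[RHS]setU0 -(star_del e u) Qu_edgesE.
by apply/setP=> f; rewrite !inE andb_orl.
Qed.

Lemma threshold_subgraph_Qu e Q u w : simple_graph e -> is_clique e Q -> u \in Q ->
  e u w -> threshold_subgraph e (Q :|: [set x | e u x]) (Qu_edges e Q u).
Proof.
move=> [_ irr] cQ uQ uw.
have neq_u v : e u v -> v != u by move=> uv; apply: contraTneq uv => ->; rewrite irr.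
split; first by rewrite Qu_edgesE subUset clique_edges_sub_gedges ?star_sub_gedges.
split.
  move=> f; rewrite Qu_edgesE => /setUP[/clique_edgesP[x [y [xQ yQ xy ->]]]|/starP[v [uv ->]]].
    by exists x, y; rewrite !inE xQ yQ.
  by exists u, v; rewrite !inE uQ uv orbT eq_sym neq_u.
apply: (thr_add (v := u)); first by rewrite !inE uQ.
  rewrite Qu_edges_del; apply: threshold_build_clique_edges; last exact/setSD/subsetUl.
  by apply/set0Pn; exists w; rewrite !inE uw orbT neq_u.
right=> x xV xu; rewrite Qu_edgesE; apply/setUP; case/setUP: xV => [xQ|].
  by left; apply/clique_edgesP; exists u, x; rewrite eq_sym.
by rewrite inE => ux; right; apply/starP; exists x.
Qed.

Lemma connected_on_hub e S u : symmetric e -> u \in S ->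
  (forall x, x \in S -> x != u -> e u x) -> connected_on e S.
Proof.
move=> sym uS hub.
have link_sym : connect_sym (link e S).
  by apply: sym_connect_sym => a b /=; rewrite sym [(a \in S) && _]andbC.
have from_u z : z \in S -> connect (link e S) u z.
  move=> zS; have [->|zu] := eqVneq z u; first exact: connect0.
  by apply: connect1; rewrite /= hub // uS zS.
by move=> x y xS yS; apply: connect_trans (from_u y yS); rewrite link_sym from_u.
Qed.

Lemma biconn_on_hub e S u : symmetric e -> u \in S ->
  (forall x, x \in S -> x != u -> e u x) -> connected_on e (S :\ u) -> biconn_on e S.
Proof.
move=> sym uS hub cS; split; first by apply/set0Pn; exists u.
split; first exact: connected_on_hub uS hub.
move=> v vS; have [->//|vu] := eqVneq v u.
apply: (connected_on_hub (u := u)) => //; first by rewrite !inE eq_sym vu.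
by move=> x /setD1P[_ xS]; apply: hub.
Qed.

Lemma biconn_on_sub_block e S : biconn_on e S -> exists2 B, is_block e B & S \subset B.
Proof.
have [n] := ubnP #|~: S|; elim: n S => // n IH S cardS bS.
have [[B [SB bB BS]]|maxS] :=
  classic (exists B : {set T}, [/\ S \subset B, biconn_on e B & B <> S]); last first.
  by exists S => //; split=> // B SB bB; apply: NNPP => BS; apply: maxS; exists B.
have SB' : S \proper B by rewrite properEneq SB andbT eq_sym; apply/eqP.
have cardB : #|~: B| < n by move: (proper_card SB') (cardsC S) (cardsC B) cardS; lia.
have [B0 bB0 BB0] := IH B cardB bB.
by exists B0; rewrite ?(subset_trans SB BB0).
Qed.

Definition cover_off F u : {set T} := \bigcup_(f in F | u \notin f) f.

Section DominatingVertex.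
Variables (e : rel T) (F : {set {set T}}) (u : T).
Hypotheses (simple_e : simple_graph e) (F_edges : F \subset gedges e).
Hypotheses (u_dom : dominates F u) (F_joined : joined_disjoint F).

Local Notation C := (cover_off F u).

Lemma notin_cover_off : u \notin C.
Proof. by apply/bigcupP=> -[f /andP[_ /negP uf] /uf]. Qed.

Lemma adj_cover_off x : x \in C -> e u x.
Proof.
case/bigcupP=> f /andP[fF uf] xf; case: (u_dom fF) => [uf'|ux]; first by rewrite uf' in uf.
by rewrite -(gedges_pair _ _ simple_e) (subsetP F_edges) ?ux.
Qed.

Lemma edge_connect f p q :
  f \in F -> u \notin f -> p \in f -> q \in f -> connect (link e C) p q.
Proof.
move=> fF uf pf qf; have [->|pq] := eqVneq p q; first exact: connect0.
have inC z : z \in f -> z \in C by move=> zf; apply/bigcupP; exists f; rewrite ?fF ?uf.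
apply: connect1; rewrite /= !inC // !andbT.
have [sym _] := simple_e; have /gedgesP[a [b [ab Ef]]] := subsetP F_edges f fF.
by move: pf qf pq; rewrite Ef => /set2P[]-> /set2P[]->; rewrite ?eqxx // sym.
Qed.

Lemma connected_cover_off : connected_on e C.
Proof.
move=> x y /bigcupP[f1 /andP[f1F uf1] xf1] /bigcupP[f2 /andP[f2F uf2] yf2].
have [dis|] := boolP [disjoint f1 & f2]; last first.
  rewrite -setI_eq0 => /set0Pn[z /setIP[zf1 zf2]].
  exact: connect_trans (edge_connect f1F uf1 xf1 zf1) (edge_connect f2F uf2 zf2 yf2).
have [a [b [af1 bf2 abF]]] := F_joined f1F f2F dis.
have uab : u \notin [set a; b].
  by rewrite !inE negb_or; apply/andP; split; [apply: contraNneq uf1 | apply: contraNneq uf2] => ->.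
apply: connect_trans (edge_connect f1F uf1 xf1 af1) _.
apply: connect_trans (edge_connect f2F uf2 bf2 yf2).
exact: edge_connect abF uab (set21 a b) (set22 a b).
Qed.

Lemma biconn_on_cover_off : biconn_on e (u |: C).
Proof.
apply: (biconn_on_hub (u := u)); first by case: simple_e.
- exact: setU11.
- by move=> x /setU1P[->|/adj_cover_off]; rewrite ?eqxx.
- by rewrite setU1K ?notin_cover_off //; apply: connected_cover_off.
Qed.

Lemma sub_Qu_edges Q : u |: C \subset Q -> F \subset Qu_edges e Q u.
Proof.
move=> CQ; apply/subsetP=> f fF; rewrite Qu_edgesE; apply/setUP.
have [sym irr] := simple_e; have /gedgesP[a [b [ab Ef]]] := subsetP F_edges f fF.
have [uf|uf] := boolP (u \in f).
  right; apply/starP; move: uf; rewrite Ef => /set2P[->|->]; first by exists b.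
  by exists a; rewrite setUC sym.
have inQ z : z \in f -> z \in Q.
  by move=> zf; apply/(subsetP CQ)/setU1r/bigcupP; exists f; rewrite ?fF.
left; apply/clique_edgesP; exists a, b; rewrite !inQ ?Ef ?set21 ?set22 //.
by split=> //; apply: contraTneq ab => ->; rewrite irr.
Qed.

End DominatingVertex.

Lemma threshold_subgraph_dominating e V F : simple_graph e -> (exists x y, e x y) ->
  threshold_subgraph e V F -> exists u w, e u w /\ dominates F u.
Proof.
move=> simple_e [x0 [y0 e0]] [FE thrF]; have [sym _] := simple_e.
have [u0 dom0] := threshold_build_dominates thrF.2 (threshold_graph_edges_within thrF).
have [F0|/set0Pn[f fF]] := eqVneq F set0.
  by exists x0, y0; split=> // f; rewrite F0 inE.
suff [w u0w] : exists w, e u0 w by exists u0, w.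
have /gedgesP[a [b [ab Ef]]] := subsetP FE f fF.
case: (dom0 f fF) => [|adj].
  by rewrite Ef => /set2P[]->; [exists b | exists a; rewrite sym].
by exists a; rewrite -(gedges_pair _ _ simple_e) (subsetP FE) ?adj ?Ef ?set21.
Qed.

End Graphs.

Theorem lemma14 (T : finType) (e : rel T) (V : {set T}) (F : {set {set T}}) :
  block_graph e ->
  (exists x y, e x y) ->
  maximal_threshold_subgraph e V F ->
  exists Q : {set T}, exists2 u : T,
    is_block e Q & u \in Q /\ F = Qu_edges e Q u.
Proof.
move=> [simple_e blocks_cliques] has_edge [[FE thrF] Fmax].
have [u [w [uw u_dom]]] := threshold_subgraph_dominating simple_e has_edge (conj FE thrF).
have F_joined := threshold_build_joined thrF.2 (threshold_graph_edges_within thrF).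
have [Q bQ CQ] := biconn_on_sub_block (biconn_on_cover_off simple_e FE u_dom F_joined).
have uQ : u \in Q by rewrite (subsetP CQ) ?setU11.
exists Q, u => //; split=> //.
have [//|FQ] := eqVproper (sub_Qu_edges simple_e FE CQ).
by case: (Fmax _ _ (threshold_subgraph_Qu simple_e (blocks_cliques Q bQ) uQ uw)).
Qed.
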